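(* For every fixed $\varepsilon>0$ there is a data structure of size $O(n^{1+\varepsilon})$, built for a sequence $Y=y_1,\dots,y_n$ of $n$ distinct real numbers, that answers every query $(i,j,\sigma)$ (for all six types $\sigma$) in constant time, i.e., with a number of table lookups bounded by a constant depending only on $\varepsilon$.
   Context: Let $Y=y_1,\dots,y_n$ be a sequence of $n$ distinct real numbers, viewed as the points $(k,y_k)$, $k=1,\dots,n$. A query is a triple $(i,j,\sigma)$ with $i,j\in\{1,\dots,n\}$ and a type $\sigma=(a,\mathrm{dir})$, where $a\in\{1,2,3\}$ and $\mathrm{dir}\in\{\rightarrow,\leftarrow\}$. The horizontal lines $y=y_i$ and $y=y_j$ split the plane into three open strips $R_1$ (above both lines), $R_2$ (between them) and $R_3$ (below both), and $S_a=\{k\in\{1,\dots,n\} : (k,y_k)\in R_a\}$. For a right query ($\mathrm{dir}=\rightarrow$): if $S_a=\emptyset$ the answer is $\emptyset$; otherwise, if $S_a$ contains an index larger than $i$ the answer is the minimum index in $S_a$ larger than $i$, and if all indices of $S_a$ are smaller than $i$ the answer is the minimum index of $S_a$. A left query ($\mathrm{dir}=\leftarrow$) is symmetric: if $S_a=\emptyset$ the answer is $\emptyset$; otherwise the answer is the maximum index in $S_a$ smaller than $i$ if one exists, and else the maximum index of $S_a$. *)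

From Stdlib Require Import Reals List Arith.
Import ListNotations.
Open Scope R_scope.

(* A sequence y_1..y_n is given as a function Y : nat -> R; only the values
   at indices 1..n matter. *)
Definition distinct_on (n : nat) (Y : nat -> R) : Prop :=
  forall k l : nat, (1 <= k <= n)%nat -> (1 <= l <= n)%nat -> k <> l -> Y k <> Y l.

Inductive region : Type := R1 | R2 | R3.   (* above both / between / below both *)
Inductive direction : Type := Right | Left.

Definition Rltb (a b : R) : bool := if Rlt_dec a b then true else false.

Definition in_region (Y : nat -> R) (i j : nat) (a : region) (k : nat) : bool :=
  match a with
  | R1 => Rltb (Rmax (Y i) (Y j)) (Y k)
  | R2 => Rltb (Rmin (Y i) (Y j)) (Y k) && Rltb (Y k) (Rmax (Y i) (Y j))
  | R3 => Rltb (Y k) (Rmin (Y i) (Y j))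
  end.

Definition S_set (n : nat) (Y : nat -> R) (i j : nat) (a : region) : list nat :=
  filter (in_region Y i j a) (seq 1 n).

Definition head_opt (l : list nat) : option nat :=
  match l with [] => None | x :: _ => Some x end.
Definition last_opt (l : list nat) : option nat :=
  match l with [] => None | x :: l' => Some (last l' x) end.

(* The answer to the query (i, j, (a, dir)); None encodes the empty answer. *)
Definition answer (n : nat) (Y : nat -> R) (i j : nat) (a : region) (d : direction)
  : option nat :=
  let S := S_set n Y i j a in
  match d with
  | Right =>
      match head_opt (filter (fun k => Nat.ltb i k) S) with
      | Some k => Some k
      | None => head_opt S
      end
  | Left =>
      match last_opt (filter (fun k => Nat.ltb k i) S) with
      | Some k => Some k
      | None => last_opt S
      end
  end.

(* A query algorithm is an adaptive decision tree: at each node it reads one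
   cell of the table (address) and branches arbitrarily on the value read. *)
Inductive ptree : Type :=
  | Leaf (ans : option nat)
  | Probe (addr : nat) (next : nat -> ptree).

(* Run the algorithm with at most [fuel] table lookups; None if it has not
   terminated within that many lookups.  Out-of-range cells read as 0. *)
Fixpoint run (fuel : nat) (table : list nat) (t : ptree) : option (option nat) :=
  match t with
  | Leaf a => Some a
  | Probe addr k =>
      match fuel with
      | O => None
      | S f => run f table (k (nth addr table 0%nat))
      end
  end.

From Pilot Require Import Defs.
From Stdlib Require Import Reals List Arith.
Open Scope R_scope.
From Stdlib Require Import Lia Lra ZArith.

(* Replacing each y_k by its rank among y_1..y_n turns the strip S_a into an
   interval [lo, hi) of ranks.  A right query then asks for the first index
   after i whose rank lies in [lo, hi), falling back to the first such index
   overall; a left query is a right query on the reversed sequence.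

   Such range-successor queries are answered on an f-ary tree of depth L over
   the rank space, with f about n^(1/L).  For every node, every local position
   of a point in the node and every pair of children, the table stores the
   first later point of the node lying in the children strictly between the
   two; it also stores the cascading maps that send a local position in a node
   to the corresponding local position in a child.  A query range splits, at
   every node it meets, into the children strictly inside it (one table cell)
   and two boundary children (recursion), so a query costs 2^O(L) probes,
   while the table has O(L 2^L n^(1 + 2/L)) cells. *)

Local Open Scope nat_scope.
Local Open Scope bool_scope.

Fixpoint count_upto (P : nat -> bool) (m : nat) : nat :=
  match m with 0 => 0 | S m' => count_upto P m' + (if P (S m') then 1 else 0) end.

Lemma count_upto_le P m : count_upto P m <= m.
Proof. induction m; simpl; [lia | destruct (P (S m)); lia]. Qed.

Lemma count_upto_true m : count_upto (fun _ => true) m = m.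
Proof. induction m; simpl; lia. Qed.

Lemma count_upto_ext P Q m :
  (forall k, 1 <= k <= m -> P k = Q k) -> count_upto P m = count_upto Q m.
Proof.
  induction m as [|m IH]; intros H; simpl; auto.
  rewrite IH by (intros; apply H; lia). rewrite (H (S m)) by lia. reflexivity.
Qed.

Lemma count_upto_mono P a b : a <= b -> count_upto P a <= count_upto P b.
Proof. induction 1; simpl; [lia | destruct (P (S m)); lia]. Qed.

Lemma count_upto_strict P i k : P k = true -> i < k -> count_upto P i < count_upto P k.
Proof.
  intros HP Hik. destruct k as [|k]; [lia|]. simpl. rewrite HP.
  pose proof (count_upto_mono P i k ltac:(lia)). lia.
Qed.

Lemma count_upto_sub P Q m :
  (forall k, 1 <= k <= m -> P k = true -> Q k = true) -> count_upto P m <= count_upto Q m.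
Proof.
  induction m as [|m IH]; intros H; simpl; auto.
  specialize (IH (fun k Hk => H k ltac:(lia))).
  destruct (P (S m)) eqn:E; [rewrite (H (S m)) by (auto; lia)|]; destruct (Q (S m)); lia.
Qed.

Lemma count_upto_lt P Q m :
  (forall k, 1 <= k <= m -> P k = true -> Q k = true) ->
  (exists k0, 1 <= k0 <= m /\ Q k0 = true /\ P k0 = false) ->
  count_upto P m < count_upto Q m.
Proof.
  induction m as [|m IH]; intros H [k0 [Hk [HQ HP]]]; [lia|]. simpl.
  pose proof (count_upto_sub P Q m (fun k Hk => H k ltac:(lia))).
  destruct (Nat.eq_dec k0 (S m)) as [->|Hne]; [rewrite HQ, HP; lia|].
  assert (count_upto P m < count_upto Q m)
    by (apply IH; [intros; apply H; auto; lia | exists k0; repeat split; auto; lia]).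
  destruct (P (S m)) eqn:E; [rewrite (H (S m)) by (auto; lia)|]; destruct (Q (S m)); lia.
Qed.

Lemma count_upto_cut P i m :
  i <= m -> count_upto (fun k => P k && (k <=? i)) m = count_upto P i.
Proof.
  induction 1 as [|m Hle IH].
  - apply count_upto_ext. intros k Hk.
    destruct (P k); simpl; auto. apply Nat.leb_le; lia.
  - cbn [count_upto]. rewrite IH.
    replace (S m <=? i) with false by (symmetry; apply Nat.leb_gt; lia).
    destruct (P (S m)); cbn; lia.
Qed.

Lemma count_upto_filter P m : count_upto P m = length (filter P (seq 1 m)).
Proof.
  induction m as [|m IH]; [reflexivity|]. cbn [count_upto].
  rewrite seq_S, filter_app, length_app, IH. simpl.
  replace (1 + m) with (S m) by lia. destruct (P (S m)); simpl; lia.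
Qed.

Definition first_in (n : nat) (P : nat -> bool) : option nat := head_opt (filter P (seq 1 n)).

(* Minimum of two optional indices, [None] playing the role of infinity. *)
Definition omin (a b : option nat) : option nat :=
  match a, b with
  | None, _ => b
  | _, None => a
  | Some x, Some y => Some (Nat.min x y)
  end.

Lemma head_filter_ge P a m x : head_opt (filter P (seq a m)) = Some x -> a <= x.
Proof.
  revert a. induction m as [|m IH]; intros a H; simpl in H; [discriminate|].
  destruct (P a); simpl in H; [injection H; lia | apply IH in H; lia].
Qed.

Lemma head_filter_orb Q1 Q2 a m :
  head_opt (filter (fun k => Q1 k || Q2 k) (seq a m)) =
  omin (head_opt (filter Q1 (seq a m))) (head_opt (filter Q2 (seq a m))).
Proof.
  revert a. induction m as [|m IH]; intros a; simpl; auto.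
  destruct (Q1 a) eqn:E1, (Q2 a) eqn:E2; simpl; auto.
  - f_equal. lia.
  - destruct (head_opt (filter Q2 (seq (S a) m))) eqn:E; simpl; auto.
    apply head_filter_ge in E. f_equal; lia.
  - destruct (head_opt (filter Q1 (seq (S a) m))) eqn:E; simpl; auto.
    apply head_filter_ge in E. f_equal; lia.
Qed.

Lemma first_in_orb n Q1 Q2 :
  first_in n (fun k => Q1 k || Q2 k) = omin (first_in n Q1) (first_in n Q2).
Proof. apply head_filter_orb. Qed.

Lemma first_in_ext n P Q :
  (forall k, 1 <= k <= n -> P k = Q k) -> first_in n P = first_in n Q.
Proof.
  intros H. unfold first_in. f_equal. apply filter_ext_in.
  intros k Hk. apply in_seq in Hk. apply H; lia.
Qed.

Lemma first_in_spec n P k : first_in n P = Some k -> 1 <= k <= n /\ P k = true.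
Proof.
  unfold first_in. destruct (filter P (seq 1 n)) as [|x l] eqn:E; simpl; intros H; [discriminate|].
  injection H as <-.
  assert (Hin : In x (filter P (seq 1 n))) by (rewrite E; left; auto).
  apply filter_In in Hin as [Hin HP]. apply in_seq in Hin. split; auto; lia.
Qed.

Lemma first_in_none n P : (forall k, 1 <= k <= n -> P k = false) -> first_in n P = None.
Proof.
  intros H. rewrite (first_in_ext n P (fun _ => false) H). unfold first_in.
  induction (seq 1 n); simpl; auto.
Qed.

(* Optional indices in [1..n] are stored in a cell as a number in [0..n],
   0 standing for [None]. *)
Definition encode (o : option nat) : nat := match o with None => 0 | Some k => k end.
Definition decode (a : nat) : option nat := match a with 0 => None | k => Some k end.

Lemma decode_encode_first n P : decode (encode (first_in n P)) = first_in n P.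
Proof.
  destruct (first_in n P) as [k|] eqn:E; simpl; auto.
  apply first_in_spec in E. destruct k; [lia | auto].
Qed.

Lemma encode_first_le n P : encode (first_in n P) <= n.
Proof. destruct (first_in n P) eqn:E; simpl; [apply first_in_spec in E|]; lia. Qed.

Fixpoint bind (t : ptree) (g : option nat -> ptree) : ptree :=
  match t with
  | Leaf a => g a
  | Probe ad k => Probe ad (fun x => bind (k x) g)
  end.

Lemma run_mono f T t a : run f T t = Some a -> forall f', f <= f' -> run f' T t = Some a.
Proof.
  revert t. induction f as [|f IH]; intros t H f' Hf;
    destruct t; try (destruct f'; simpl in *; congruence).
  destruct f' as [|f']; [lia|]. simpl in *. apply IH; auto; lia.
Qed.

Lemma run_bind f1 f2 T t g a b :
  run f1 T t = Some a -> run f2 T (g a) = Some b -> run (f1 + f2) T (bind t g) = Some b.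
Proof.
  revert t. induction f1 as [|f1 IH]; intros t H1 H2; destruct t; simpl in H1; try discriminate.
  - injection H1 as <-. eapply run_mono; eauto; lia.
  - injection H1 as <-. eapply run_mono; eauto; lia.
  - simpl. apply IH; auto.
Qed.

Lemma div_iff b a v : 0 < b -> (a / b = v <-> v * b <= a < v * b + b).
Proof.
  intros Hb. split.
  - intros <-. pose proof (Nat.div_mod a b ltac:(lia)).
    pose proof (Nat.mod_upper_bound a b ltac:(lia)). nia.
  - intros H. symmetry. apply (Nat.div_unique a b v (a - v * b)); nia.
Qed.

Lemma div_bounds b a : 0 < b -> (a / b) * b <= a < (a / b) * b + b.
Proof. intros Hb. apply (div_iff b a (a / b) Hb). reflexivity. Qed.

(* A query range [lo, hi) meeting the parent block [u*s, (u+f)*s) is split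
   along child blocks of width [s]: it touches the children [cl <= ch],
   contains every child strictly between them, and meets [cl] and [ch]
   possibly partially. *)
Section RangeSplit.
Variables (s f u lo hi : nat).
Hypothesis s_pos : 0 < s.
Let lo' := Nat.max lo (u * s).
Let hi' := Nat.min hi ((u + f) * s).
Let cl := lo' / s.
Let ch := (hi' - 1) / s.
Hypothesis meets : lo' < hi'.

Lemma boundary_children : u <= cl /\ cl <= ch /\ ch < u + f.
Proof.
  split; [|split].
  - apply Nat.div_le_lower_bound; unfold lo'; lia.
  - apply Nat.Div0.div_le_mono; lia.
  - apply Nat.Div0.div_lt_upper_bound. unfold hi' in *. lia.
Qed.

Lemma range_split r : u * s <= r < (u + f) * s ->
  (lo <= r < hi <->
   ((cl + 1) * s <= r < ch * s) \/ (r / s = cl /\ lo <= r < hi) \/ (r / s = ch /\ lo <= r < hi)).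
Proof.
  intros Hr. pose proof (div_bounds s lo' s_pos) as Bl.
  pose proof (div_bounds s (hi' - 1) s_pos) as Bh. pose proof (div_bounds s r s_pos) as Br.
  fold cl in Bl. fold ch in Bh.
  split.
  - intros Hlr.
    assert (cl <= r / s) by (apply Nat.Div0.div_le_mono; unfold lo'; lia).
    assert (r / s <= ch) by (apply Nat.Div0.div_le_mono; unfold hi'; lia).
    destruct (Nat.eq_dec (r / s) cl); [right; left; auto|].
    destruct (Nat.eq_dec (r / s) ch); [right; right; auto|].
    left. assert ((cl + 1) * s <= r / s * s) by (apply Nat.mul_le_mono_r; lia).
    assert ((r / s + 1) * s <= ch * s) by (apply Nat.mul_le_mono_r; lia). lia.
  - intros [H|[H|H]]; try tauto. unfold lo', hi' in *. lia.
Qed.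
End RangeSplit.

(* An [f]-ary tree of depth [L] over the rank space [0, f^L): the node [(d, v)]
   at depth [d] is the block of ranks [v * f^(L-d), (v+1) * f^(L-d)).  The
   points [k] in [1..n] (with ranks [rho k]) are distributed over the nodes. *)
Section RankTree.
Variables (n f L : nat) (rho : nat -> nat).
Hypothesis f_pos : 1 <= f.

Definition block (d : nat) : nat := f ^ (L - d).
Definition in_node (d v k : nat) : bool := rho k / block d =? v.
Definition local_pos (d v i : nat) : nat := count_upto (in_node d v) i.
Definition node_succ (d v lo hi p : nat) : option nat :=
  first_in n (fun k => in_node d v k && (p <? local_pos d v k) && (lo <=? rho k) && (rho k <? hi)).

Lemma decode_encode_node_succ d v lo hi p :
  decode (encode (node_succ d v lo hi p)) = node_succ d v lo hi p.
Proof. apply decode_encode_first. Qed.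

(* Fractional cascading: the local position in child [c] of [(d, v)] of the
   point at local position [p] of [(d, v)]. *)
Definition cascade (d v c p : nat) : nat :=
  count_upto (fun k => in_node (S d) (v * f + c) k && (local_pos d v k <=? p)) n.

Lemma block_pos d : 0 < block d.
Proof. unfold block. apply Nat.neq_0_lt_0, Nat.pow_nonzero. lia. Qed.

Lemma block_succ d : d < L -> block d = block (S d) * f.
Proof.
  intros. unfold block. replace (L - d) with (S (L - S d)) by lia.
  rewrite Nat.pow_succ_r'. lia.
Qed.

Lemma block_L : block L = 1.
Proof. unfold block. rewrite Nat.sub_diag. reflexivity. Qed.

Lemma in_node_iff d v k :
  in_node d v k = true <-> v * block d <= rho k < v * block d + block d.
Proof. unfold in_node. rewrite Nat.eqb_eq. apply div_iff, block_pos. Qed.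

Lemma child_in_node d v c k : d < L -> c < f ->
  in_node (S d) (v * f + c) k = true -> in_node d v k = true.
Proof.
  intros HdL Hc H. apply in_node_iff in H. apply in_node_iff.
  rewrite (block_succ d HdL). nia.
Qed.

Lemma local_pos_lt d v i k : in_node d v k = true ->
  (local_pos d v i <? local_pos d v k) = (i <? k).
Proof.
  intros H. unfold local_pos. destruct (Nat.ltb_spec i k).
  - apply Nat.ltb_lt. apply count_upto_strict; auto.
  - apply Nat.ltb_ge. apply count_upto_mono; auto.
Qed.

Definition inj_on (g : nat -> nat) : Prop :=
  forall a b, 1 <= a <= n -> 1 <= b <= n -> g a = g b -> a = b.

Lemma local_pos_le_block d v i : inj_on rho -> i <= n -> local_pos d v i <= block d.
Proof.
  intros Hinj Hi. unfold local_pos, in_node. rewrite count_upto_filter.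
  set (l := filter (fun k => rho k / block d =? v) (seq 1 i)).
  rewrite <- (length_map rho l).
  transitivity (length (seq (v * block d) (block d))); [|rewrite length_seq; lia].
  apply NoDup_incl_length.
  - apply NoDup_map_NoDup_ForallPairs; [|apply NoDup_filter, seq_NoDup].
    intros a b Ha Hb. unfold l in *. apply filter_In in Ha as [Ha _], Hb as [Hb _].
    apply in_seq in Ha, Hb. apply Hinj; lia.
  - intros y Hy. apply in_map_iff in Hy as [k [<- Hk]].
    unfold l in Hk. apply filter_In in Hk as [_ Hk].
    apply Nat.eqb_eq, (div_iff (block d)) in Hk; [|apply block_pos]. apply in_seq. lia.
Qed.

Lemma cascade_correct d v c i : d < L -> c < f -> i <= n ->
  cascade d v c (local_pos d v i) = local_pos (S d) (v * f + c) i.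
Proof.
  intros HdL Hc Hi. unfold cascade.
  change (local_pos (S d) (v * f + c) i) with (count_upto (in_node (S d) (v * f + c)) i).
  rewrite <- (count_upto_cut (in_node (S d) (v * f + c)) i n Hi).
  apply count_upto_ext. intros k Hk.
  destruct (in_node (S d) (v * f + c) k) eqn:E; simpl; auto.
  apply child_in_node in E; auto.
  pose proof (local_pos_lt d v i k E) as M.
  destruct (Nat.ltb_spec (local_pos d v i) (local_pos d v k)), (Nat.ltb_spec i k);
    try discriminate M;
    destruct (Nat.leb_spec (local_pos d v k) (local_pos d v i));
    destruct (Nat.leb_spec k i); auto; lia.
Qed.

Lemma node_succ_after d v lo hi i :
  node_succ d v lo hi (local_pos d v i) =
  first_in n (fun k => in_node d v k && (i <? k) && (lo <=? rho k) && (rho k <? hi)).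
Proof.
  apply first_in_ext. intros k _.
  destruct (in_node d v k) eqn:E; [rewrite local_pos_lt by exact E|]; reflexivity.
Qed.

(* A leaf holds at most the single rank [v]. *)
Lemma node_succ_leaf v lo hi p :
  node_succ L v lo hi p = if (lo <=? v) && (v <? hi) then node_succ L v v (S v) p else None.
Proof.
  assert (Hrho : forall k, in_node L v k = true -> rho k = v).
  { intros k Hk. apply in_node_iff in Hk. rewrite block_L in Hk. lia. }
  destruct ((lo <=? v) && (v <? hi)) eqn:E.
  - apply first_in_ext. intros k _.
    destruct (in_node L v k) eqn:Ek; simpl; auto. rewrite (Hrho k Ek).
    apply andb_prop in E as [-> ->].
    rewrite Nat.leb_refl, (proj2 (Nat.ltb_lt v (S v))) by lia. reflexivity.
  - apply first_in_none. intros k _.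
    destruct (in_node L v k) eqn:Ek; simpl; auto. rewrite (Hrho k Ek).
    rewrite <- Bool.andb_assoc, E. apply Bool.andb_false_r.
Qed.

Lemma node_succ_disjoint d v lo hi p : d < L ->
  Nat.min hi ((v * f + f) * block (S d)) <= Nat.max lo (v * f * block (S d)) ->
  node_succ d v lo hi p = None.
Proof.
  intros HdL Hle. apply first_in_none. intros k _.
  destruct (in_node d v k) eqn:Ek; simpl; auto.
  apply in_node_iff in Ek. rewrite (block_succ d HdL) in Ek.
  destruct (Nat.leb_spec lo (rho k)), (Nat.ltb_spec (rho k) hi);
    rewrite ?Bool.andb_false_r; auto; lia.
Qed.

(* The answer of an internal node is the earliest of three answers: that of
   the children strictly inside the query range (read from a table), and those
   of the two boundary children (found recursively). *)
Lemma node_succ_split d v lo hi i : d < L ->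
  let s := block (S d) in
  let lo' := Nat.max lo (v * f * s) in let hi' := Nat.min hi ((v * f + f) * s) in
  lo' < hi' ->
  let cl := lo' / s in let ch := (hi' - 1) / s in
  node_succ d v lo hi (local_pos d v i) =
  omin (node_succ d v ((cl + 1) * s) (ch * s) (local_pos d v i))
       (omin (node_succ (S d) cl lo hi (local_pos (S d) cl i))
             (node_succ (S d) ch lo hi (local_pos (S d) ch i))).
Proof.
  intros HdL s lo' hi' Hmeet cl ch.
  assert (Hs : 0 < s) by apply block_pos.
  destruct (boundary_children s f (v * f) lo hi Hs Hmeet) as [Hl [Hlh Hh]].
  fold lo' hi' in Hl, Hlh, Hh. fold cl ch in Hl, Hlh, Hh.
  rewrite !node_succ_after, <- !first_in_orb. apply first_in_ext. intros k _.
  assert (Hchild : forall c, v * f <= c < v * f + f ->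
             in_node (S d) c k = true -> in_node d v k = true).
  { intros c Hc Hk. replace c with (v * f + (c - v * f)) in Hk by lia.
    apply child_in_node in Hk; auto; lia. }
  destruct (in_node d v k) eqn:Ek.
  - apply in_node_iff in Ek. rewrite (block_succ d HdL) in Ek. fold s in Ek.
    pose proof (range_split s f (v * f) lo hi Hs Hmeet (rho k) ltac:(lia)) as Hsplit.
    fold lo' hi' cl ch in Hsplit.
    unfold in_node. fold s.
    destruct (Nat.eqb_spec (rho k / s) cl), (Nat.eqb_spec (rho k / s) ch),
      (Nat.ltb_spec i k), (Nat.leb_spec lo (rho k)), (Nat.ltb_spec (rho k) hi),
      (Nat.leb_spec ((cl + 1) * s) (rho k)), (Nat.ltb_spec (rho k) (ch * s));
      simpl; auto; exfalso; intuition lia.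
  - destruct (in_node (S d) cl k) eqn:Ec; [apply Hchild in Ec; [congruence | lia]|].
    destruct (in_node (S d) ch k) eqn:Eh; [apply Hchild in Eh; [congruence | lia]|].
    reflexivity.
Qed.
End RankTree.

(* It is parametrized by the address
   [addr kind d key x y] of the table cells it reads; cells of kind 0 hold the
   answers of a node for ranges made of whole children [x+1 .. y-1], cells of
   kind 1 the cascading map to child [x], cells of kind 2 the leaf answers. *)
Section Descent.
Variables (f L : nat) (addr : nat -> nat -> nat -> nat -> nat -> nat).

Definition node_key (d v p : nat) : nat := v * (block f L d + 1) + p.

(* [descend m v lo hi p] computes [node_succ] at the node [v] of height [m]
   from local position [p]: the children strictly inside [lo, hi) are handled
   by one kind-0 cell, and the (at most two) boundary children recursively,
   after cascading the local position to them. *)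
Fixpoint descend (m v lo hi p : nat) : ptree :=
  match m with
  | 0 => if (lo <=? v) && (v <? hi)
         then Probe (addr 2 L (node_key L v p) 0 0) (fun a => Leaf (decode a))
         else Leaf None
  | S m' =>
     let d := L - m in let s := block f L (L - m') in let u := v * f in
     let lo' := Nat.max lo (u * s) in let hi' := Nat.min hi ((u + f) * s) in
     if hi' <=? lo' then Leaf None else
     let cl := lo' / s in let ch := (hi' - 1) / s in
     let key := node_key d v p in
     Probe (addr 0 d key (cl + 1 - u) (ch - u)) (fun mid =>
     Probe (addr 1 d key (cl - u) 0) (fun pl =>
     bind (descend m' cl lo hi pl) (fun rl =>
     Probe (addr 1 d key (ch - u) 0) (fun ph =>
     bind (descend m' ch lo hi ph) (fun rh => Leaf (omin (decode mid) (omin rl rh)))))))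
  end.

(* Number of probes of [descend m]: exponential in the height only. *)
Fixpoint cost (m : nat) : nat := match m with 0 => 1 | S m' => 3 + 2 * cost m' end.

Record cells_ok (n : nat) (rho : nat -> nat) (T : list nat) : Prop := {
  mid_ok : forall d v x y p, d < L -> v < f ^ d -> x <= f -> y <= f -> p <= block f L d ->
    nth (addr 0 d (node_key d v p) x y) T 0 =
    encode (node_succ n f L rho d v ((v * f + x) * block f L (S d))
                                     ((v * f + y) * block f L (S d)) p);
  cascade_ok : forall d v c p, d < L -> v < f ^ d -> c < f -> p <= block f L d ->
    nth (addr 1 d (node_key d v p) c 0) T 0 = cascade n f L rho d v c p;
  leaf_ok : forall v p, v < f ^ L -> p <= 1 ->
    nth (addr 2 L (node_key L v p) 0 0) T 0 = encode (node_succ n f L rho L v v (S v) p) }.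

Lemma descend_correct n rho T : 1 <= f -> inj_on n rho -> cells_ok n rho T ->
  forall m, m <= L -> forall v lo hi i, v < f ^ (L - m) -> i <= n ->
  run (cost m) T (descend m v lo hi (local_pos f L rho (L - m) v i)) =
  Some (node_succ n f L rho (L - m) v lo hi (local_pos f L rho (L - m) v i)).
Proof.
  intros Hf Hinj HT. induction m as [|m IH]; intros Hm v lo hi i Hv Hi.
  - rewrite Nat.sub_0_r in *. cbn [descend]. rewrite node_succ_leaf by exact Hf.
    destruct ((lo <=? v) && (v <? hi)); cbn [cost run]; [|reflexivity].
    rewrite (leaf_ok _ _ _ HT), decode_encode_node_succ; auto.
    rewrite <- (block_L f L). apply (local_pos_le_block n); auto.
  - set (d := L - S m) in *. assert (Hd : L - m = S d) by lia. assert (HdL : d < L) by lia.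
    rewrite Hd in IH. cbn [descend]. rewrite Hd.
    set (p := local_pos f L rho d v i). set (s := block f L (S d)).
    assert (Hp : p <= block f L d) by (apply (local_pos_le_block n); auto).
    set (lo' := Nat.max lo (v * f * s)). set (hi' := Nat.min hi ((v * f + f) * s)).
    destruct (Nat.leb_spec hi' lo') as [Hle|Hlt].
    { destruct (cost (S m)); cbn [run]; rewrite node_succ_disjoint; auto. }
    set (cl := lo' / s). set (ch := (hi' - 1) / s).
    destruct (boundary_children s f (v * f) lo hi (block_pos f L Hf (S d)) Hlt) as [Hl [Hlh Hh]].
    fold lo' hi' in Hl, Hlh, Hh. fold cl ch in Hl, Hlh, Hh.
    assert (Hvf : v * f + f <= f ^ S d) by (rewrite Nat.pow_succ_r'; nia).
    replace (cost (S m)) with (S (S (cost m + S (cost m + 0)))) by (cbn; lia).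
    cbn [run]. rewrite (mid_ok _ _ _ HT), (cascade_ok _ _ _ HT) by (auto; lia).
    subst p. rewrite cascade_correct by (auto; lia).
    replace (v * f + (cl - v * f)) with cl by lia.
    eapply run_bind; [apply IH; auto; lia|].
    cbn [run]. rewrite (cascade_ok _ _ _ HT), cascade_correct by (auto; lia).
    replace (v * f + (ch - v * f)) with ch by lia.
    eapply run_bind; [apply IH; auto; lia|].
    cbn [run]. rewrite decode_encode_node_succ, (node_succ_split n f L rho Hf d v lo hi i HdL Hlt).
    replace (v * f + (cl + 1 - v * f)) with (cl + 1) by lia.
    replace (v * f + (ch - v * f)) with ch by lia. reflexivity.
Qed.
End Descent.

Lemma digit_split B a b : b < B -> (a * B + b) / B = a /\ (a * B + b) mod B = b.
Proof.
  intros Hb. split.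
  - apply div_iff; lia.
  - symmetry. apply (Nat.mod_unique _ _ a); lia.
Qed.

Lemma digit_bound a A b B : a < A -> b < B -> a * B + b < A * B.
Proof. intros. assert ((a + 1) * B <= A * B) by (apply Nat.mul_le_mono_r; lia). lia. Qed.

Section Layout.
Variables (n f L : nat).
Hypothesis f_pos : 1 <= f.

(* The table holds the ranks [rho0 k] at addresses [0..n], followed by the
   cells of two rank trees, tree [t = 0] for [rho0] and [t = 1] for [rho1].
   The tree cell [(t, kind, d, key, x, y)] lives at a mixed-radix address with
   radices [2, 3, L+1, 2 f^L, f+1, f+1]. *)
Definition key_range : nat := 2 * f ^ L.
Definition coord_range : nat := f + 1.

Definition tree_addr (t kind d w x y : nat) : nat :=
  S n + (((((t * 3 + kind) * S L + d) * key_range + w) * coord_range + x) * coord_range + y).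

Definition table_size : nat := S n + 2 * 3 * S L * key_range * coord_range * coord_range.

Definition cell_value (rho : nat -> nat) (kind d w x y : nat) : nat :=
  let v := w / (block f L d + 1) in let p := w mod (block f L d + 1) in
  match kind with
  | 0 => encode (node_succ n f L rho d v ((v * f + x) * block f L (S d))
                                         ((v * f + y) * block f L (S d)) p)
  | 1 => cascade n f L rho d v x p
  | _ => encode (node_succ n f L rho d v v (S v) p)
  end.

Definition entry (rho0 rho1 : nat -> nat) (a : nat) : nat :=
  if a <? S n then rho0 a else
  let a0 := a - S n in
  let y := a0 mod coord_range in let a1 := a0 / coord_range in
  let x := a1 mod coord_range in let a2 := a1 / coord_range in
  let w := a2 mod key_range in let a3 := a2 / key_range in
  let d := a3 mod S L in let a4 := a3 / S L in
  let kind := a4 mod 3 in let t := a4 / 3 in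
  cell_value (if t =? 0 then rho0 else rho1) kind d w x y.

Definition build_table (rho0 rho1 : nat -> nat) : list nat :=
  map (entry rho0 rho1) (seq 0 table_size).

Lemma build_table_length rho0 rho1 : length (build_table rho0 rho1) = table_size.
Proof. unfold build_table. rewrite length_map, length_seq. reflexivity. Qed.

Lemma nth_build_table rho0 rho1 a : a < table_size ->
  nth a (build_table rho0 rho1) 0 = entry rho0 rho1 a.
Proof.
  intros H. unfold build_table.
  rewrite (nth_indep _ 0 (entry rho0 rho1 0)) by (rewrite length_map, length_seq; lia).
  rewrite map_nth, seq_nth by lia. reflexivity.
Qed.

Lemma entry_rank rho0 rho1 k : k <= n -> entry rho0 rho1 k = rho0 k.
Proof.
  intros Hk. unfold entry. replace (k <? S n) with true by (symmetry; apply Nat.ltb_lt; lia).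
  reflexivity.
Qed.

Lemma entry_tree_addr rho0 rho1 t kind d w x y :
  t < 2 -> kind < 3 -> d <= L -> w < key_range -> x < coord_range -> y < coord_range ->
  entry rho0 rho1 (tree_addr t kind d w x y) =
  cell_value (if t =? 0 then rho0 else rho1) kind d w x y.
Proof.
  intros Ht Hk Hd Hw Hx Hy. unfold entry, tree_addr.
  rewrite (proj2 (Nat.ltb_ge _ _)) by lia. rewrite Nat.add_comm, Nat.add_sub.
  destruct (digit_split _ ((((t * 3 + kind) * S L + d) * key_range + w) * coord_range + x) _ Hy)
    as [-> ->].
  destruct (digit_split _ (((t * 3 + kind) * S L + d) * key_range + w) _ Hx) as [-> ->].
  destruct (digit_split _ ((t * 3 + kind) * S L + d) _ Hw) as [-> ->].
  destruct (digit_split (S L) (t * 3 + kind) d ltac:(lia)) as [-> ->].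
  destruct (digit_split _ t _ Hk) as [-> ->]. reflexivity.
Qed.

Lemma tree_addr_lt t kind d w x y :
  t < 2 -> kind < 3 -> d <= L -> w < key_range -> x < coord_range -> y < coord_range ->
  tree_addr t kind d w x y < table_size.
Proof.
  intros. unfold tree_addr, table_size. apply Nat.add_lt_mono_l.
  repeat apply digit_bound; auto; lia.
Qed.

Lemma node_key_digits d v p : p <= block f L d ->
  node_key f L d v p / (block f L d + 1) = v /\ node_key f L d v p mod (block f L d + 1) = p.
Proof. intros. apply digit_split. lia. Qed.

(* Keys fit: a depth-[d] node has [f^d] nodes and [f^(L-d) + 1] positions. *)
Lemma node_key_lt d v p : d <= L -> v < f ^ d -> p <= block f L d -> node_key f L d v p < key_range.
Proof.
  intros Hd Hv Hp. unfold node_key, key_range.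
  assert (Hsplit : f ^ d * block f L d = f ^ L)
    by (unfold block; rewrite <- Nat.pow_add_r; f_equal; lia).
  assert ((v + 1) * block f L d <= f ^ d * block f L d) by (apply Nat.mul_le_mono_r; lia).
  assert (f ^ d <= f ^ L) by (apply Nat.pow_le_mono_r; lia). lia.
Qed.

Lemma build_table_cells_ok rho0 rho1 t : t < 2 ->
  cells_ok f L (tree_addr t) n (if t =? 0 then rho0 else rho1) (build_table rho0 rho1).
Proof.
  intros Ht.
  assert (Hcell : forall kind d v p x y, kind < 3 -> d <= L -> v < f ^ d -> p <= block f L d ->
            x <= f -> y <= f ->
            nth (tree_addr t kind d (node_key f L d v p) x y) (build_table rho0 rho1) 0 =
            cell_value (if t =? 0 then rho0 else rho1) kind d (node_key f L d v p) x y).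
  { intros kind d v p x y Hk Hd Hv Hp Hx Hy.
    assert (node_key f L d v p < key_range) by (apply node_key_lt; auto).
    rewrite nth_build_table by (apply tree_addr_lt; unfold coord_range; auto; lia).
    apply entry_tree_addr; unfold coord_range; auto; lia. }
  split.
  - intros d v x y p Hd Hv Hx Hy Hp. rewrite Hcell by (auto; lia).
    unfold cell_value. destruct (node_key_digits d v p Hp) as [-> ->]. reflexivity.
  - intros d v c p Hd Hv Hc Hp. rewrite Hcell by (auto; lia).
    unfold cell_value. destruct (node_key_digits d v p Hp) as [-> ->]. reflexivity.
  - intros v p Hv Hp. assert (Hp' : p <= block f L L) by (rewrite block_L; auto).
    rewrite Hcell by (auto; lia).
    unfold cell_value. destruct (node_key_digits L v p Hp') as [-> ->]. reflexivity.
Qed.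

Lemma build_table_values rho0 rho1 x : (forall a, rho0 a <= n) ->
  In x (build_table rho0 rho1) -> x <= n.
Proof.
  intros H0 Hin. unfold build_table in Hin. apply in_map_iff in Hin as [a [<- _]].
  unfold entry. destruct (a <? S n); auto.
  cbv zeta. unfold cell_value. destruct (_ / 3 =? 0); destruct (_ mod 3) as [|[|]];
    try apply encode_first_le; apply count_upto_le.
Qed.
End Layout.

Definition range_succ (n : nat) (rho : nat -> nat) (lo hi i : nat) : option nat :=
  first_in n (fun k => (i <? k) && (lo <=? rho k) && (rho k <? hi)).

(* At the root every point is in the node, so local positions are indices and
   [descend] answers range-successor queries. *)
Lemma descend_root f L addr n rho T lo hi i : 1 <= f -> n <= f ^ L ->
  (forall k, 1 <= k <= n -> rho k < n) -> inj_on n rho -> cells_ok f L addr n rho T -> i <= n ->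
  run (cost L) T (descend f L addr L 0 lo hi i) = Some (range_succ n rho lo hi i).
Proof.
  intros Hf HN Hr Hinj HT Hi.
  assert (Hroot : forall k, 1 <= k <= n -> in_node f L rho 0 0 k = true).
  { intros k Hk. unfold in_node, block.
    rewrite Nat.sub_0_r, Nat.div_small by (specialize (Hr k); lia).
    reflexivity. }
  assert (Hpos : forall k, k <= n -> local_pos f L rho 0 0 k = k).
  { intros k Hk. rewrite <- (count_upto_true k) at 2. apply count_upto_ext.
    intros l Hl. apply Hroot; lia. }
  pose proof (descend_correct f L addr n rho T Hf Hinj HT L (le_n L) 0 lo hi i) as E.
  rewrite Nat.sub_diag, node_succ_after, Hpos in E by auto. rewrite E by (simpl; lia).
  f_equal. apply first_in_ext. intros k Hk.
  rewrite Hroot by exact Hk. reflexivity.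
Qed.

Definition rank (n : nat) (Y : nat -> R) (k : nat) : nat :=
  count_upto (fun l => Rltb (Y l) (Y k)) n.

Lemma Rltb_iff a b : Rltb a b = true <-> (a < b)%R.
Proof. unfold Rltb. destruct (Rlt_dec a b); split; intros; auto; discriminate. Qed.

Lemma Rltb_false a b : Rltb a b = false <-> ~ (a < b)%R.
Proof. unfold Rltb. destruct (Rlt_dec a b); split; intros; auto; try discriminate; tauto. Qed.

Section Ranks.
Variables (n : nat) (Y : nat -> R).
Hypothesis Y_distinct : distinct_on n Y.

Lemma rank_le k : rank n Y k <= n.
Proof. apply count_upto_le. Qed.

Lemma rank_lt a b : 1 <= a <= n -> (Y a < Y b)%R -> rank n Y a < rank n Y b.
Proof.
  intros Ha H. apply count_upto_lt.
  - intros l _ Hl. apply Rltb_iff in Hl. apply Rltb_iff. lra.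
  - exists a. split; auto. split; [apply Rltb_iff; auto|]. apply Rltb_false, Rlt_irrefl.
Qed.

Lemma rank_bound k : 1 <= k <= n -> rank n Y k < n.
Proof.
  intros Hk. rewrite <- (count_upto_true n) at 2. apply count_upto_lt; auto.
  exists k. split; auto. split; auto. apply Rltb_false, Rlt_irrefl.
Qed.

Lemma Rltb_rank a b : 1 <= a <= n -> 1 <= b <= n -> Rltb (Y a) (Y b) = (rank n Y a <? rank n Y b).
Proof.
  intros Ha Hb. destruct (total_order_T (Y a) (Y b)) as [[H|H]|H].
  - rewrite (proj2 (Rltb_iff _ _) H). symmetry. apply Nat.ltb_lt, rank_lt; auto.
  - destruct (Nat.eq_dec a b) as [->|Hne]; [|exfalso; exact (Y_distinct a b Ha Hb Hne H)].
    rewrite (proj2 (Rltb_false _ _)) by apply Rlt_irrefl. symmetry. apply Nat.ltb_irrefl.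
  - rewrite (proj2 (Rltb_false _ _)) by lra. symmetry. apply Nat.ltb_ge.
    apply Nat.lt_le_incl, rank_lt; auto.
Qed.

Lemma rank_inj : inj_on n (rank n Y).
Proof.
  intros a b Ha Hb E. destruct (Nat.eq_dec a b) as [|Hne]; auto. exfalso.
  destruct (total_order_T (Y a) (Y b)) as [[H|H]|H].
  - apply (rank_lt a b Ha) in H. lia.
  - exact (Y_distinct a b Ha Hb Hne H).
  - apply (rank_lt b a Hb) in H. lia.
Qed.

Definition region_range (a : region) (ri rj : nat) : nat * nat :=
  match a with
  | Defs.R1 => (S (Nat.max ri rj), n)
  | Defs.R2 => (S (Nat.min ri rj), Nat.max ri rj)
  | Defs.R3 => (0, Nat.min ri rj)
  end.

Lemma in_region_rank i j a k : 1 <= i <= n -> 1 <= j <= n -> 1 <= k <= n ->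
  let '(lo, hi) := region_range a (rank n Y i) (rank n Y j) in
  in_region Y i j a k = (lo <=? rank n Y k) && (rank n Y k <? hi).
Proof.
  intros Hi Hj Hk. pose proof (rank_bound k Hk) as Hkn.
  assert (Hij : (Y i <= Y j)%R <-> rank n Y i <= rank n Y j).
  { rewrite <- Nat.ltb_ge, <- (Rltb_rank j i Hj Hi), Rltb_false. lra. }
  unfold in_region, Rmax, Rmin.
  destruct (Rle_dec (Y i) (Y j)) as [H|H]; [apply Hij in H | rewrite Hij in H];
    destruct a; cbn [region_range];
    rewrite ?(Rltb_rank _ _ Hi Hk), ?(Rltb_rank _ _ Hj Hk), ?(Rltb_rank _ _ Hk Hi),
      ?(Rltb_rank _ _ Hk Hj);
    repeat match goal with
    | |- context [?x <=? ?y] => destruct (Nat.leb_spec x y)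
    | |- context [?x <? ?y] => destruct (Nat.ltb_spec x y)
    end; simpl; try reflexivity; lia.
Qed.
End Ranks.

Definition or_else (a b : option nat) : option nat :=
  match a with Some k => Some k | None => b end.

Lemma filter_filter_andb {A} (P Q : A -> bool) l :
  filter P (filter Q l) = filter (fun k => Q k && P k) l.
Proof.
  induction l as [|x l IH]; simpl; auto.
  destruct (Q x); simpl; [destruct (P x); simpl; rewrite IH|]; auto.
Qed.

Lemma answer_right n Y i j a : distinct_on n Y -> 1 <= i <= n -> 1 <= j <= n ->
  let '(lo, hi) := region_range n a (rank n Y i) (rank n Y j) in
  answer n Y i j a Right =
  or_else (range_succ n (rank n Y) lo hi i) (range_succ n (rank n Y) lo hi 0).
Proof.
  intros HY Hi Hj. pose proof (fun k => in_region_rank n Y HY i j a k Hi Hj) as Hreg.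
  destruct (region_range n a (rank n Y i) (rank n Y j)) as [lo hi].
  unfold answer, S_set, range_succ. rewrite filter_filter_andb.
  change (head_opt (filter ?P (seq 1 n))) with (first_in n P).
  rewrite (first_in_ext n (fun k => in_region Y i j a k && (i <? k))
     (fun k => (i <? k) && (lo <=? rank n Y k) && (rank n Y k <? hi))).
  2:{ intros k Hk. rewrite (Hreg k Hk).
      destruct (i <? k); simpl; rewrite ?Bool.andb_true_r, ?Bool.andb_false_r; auto. }
  destruct (first_in n _); [reflexivity|]. apply first_in_ext. intros k Hk.
  rewrite (Hreg k Hk). replace (0 <? k) with true by (symmetry; apply Nat.ltb_lt; lia).
  reflexivity.
Qed.

Lemma last_opt_cons (l : list nat) a :
  last_opt (a :: l) = or_else (last_opt l) (Some a).
Proof.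
  destruct l as [|b l]; [reflexivity|]. cbn [last_opt or_else]. f_equal.
  revert a b. induction l as [|c l IH]; intros a b; [reflexivity|].
  change (last (c :: l) a = last (c :: l) b). rewrite !IH. reflexivity.
Qed.

Lemma last_opt_rev (l : list nat) : last_opt l = head_opt (rev l).
Proof.
  induction l as [|a l IH]; auto. rewrite last_opt_cons, IH. simpl.
  destruct (rev l); reflexivity.
Qed.

Lemma rev_seq1 n : rev (seq 1 n) = map (fun k => n + 1 - k) (seq 1 n).
Proof.
  induction n as [|n IH]; auto.
  replace (rev (seq 1 (S n))) with (S n :: rev (seq 1 n))
    by (rewrite seq_S, rev_app_distr; reflexivity).
  rewrite IH. cbn [seq map]. f_equal; [lia|]. rewrite <- (seq_shift n 1), map_map. apply map_ext_in.
  intros a Ha. apply in_seq in Ha. lia.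
Qed.

Lemma last_filter n P : last_opt (filter P (seq 1 n)) =
  option_map (fun k => n + 1 - k) (first_in n (fun k => P (n + 1 - k))).
Proof.
  rewrite last_opt_rev, <- filter_rev, rev_seq1, filter_map_swap.
  unfold first_in. destruct (filter _ (seq 1 n)); reflexivity.
Qed.

Lemma answer_left n Y i j a : distinct_on n Y -> 1 <= i <= n -> 1 <= j <= n ->
  let rev_rank k := rank n Y (n + 1 - k) in
  let '(lo, hi) := region_range n a (rank n Y i) (rank n Y j) in
  answer n Y i j a Left =
  option_map (fun k => n + 1 - k)
    (or_else (range_succ n rev_rank lo hi (n + 1 - i)) (range_succ n rev_rank lo hi 0)).
Proof.
  intros HY Hi Hj rev_rank. pose proof (fun k => in_region_rank n Y HY i j a k Hi Hj) as Hreg.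
  destruct (region_range n a (rank n Y i) (rank n Y j)) as [lo hi].
  unfold answer, S_set, range_succ. rewrite filter_filter_andb, !last_filter.
  rewrite (first_in_ext n (fun k => in_region Y i j a (n + 1 - k) && (n + 1 - k <? i))
     (fun k => (n + 1 - i <? k) && (lo <=? rev_rank k) && (rev_rank k <? hi))).
  2:{ intros k Hk. rewrite (Hreg (n + 1 - k)) by lia. unfold rev_rank.
      replace (n + 1 - k <? i) with (n + 1 - i <? k)
        by (destruct (Nat.ltb_spec (n + 1 - k) i), (Nat.ltb_spec (n + 1 - i) k); auto; lia).
      destruct (n + 1 - i <? k); simpl; rewrite ?Bool.andb_true_r, ?Bool.andb_false_r; auto. }
  destruct (first_in n _); [reflexivity|]. simpl. f_equal. apply first_in_ext. intros k Hk.
  rewrite (Hreg (n + 1 - k)) by lia.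
  replace (0 <? k) with true by (symmetry; apply Nat.ltb_lt; lia). reflexivity.
Qed.

Definition or_else_tree (t1 t2 : ptree) : ptree :=
  bind t1 (fun r => match r with Some k => Leaf (Some k) | None => t2 end).

Lemma run_or_else f1 f2 T t1 t2 a b :
  run f1 T t1 = Some a -> run f2 T t2 = Some b ->
  run (f1 + f2) T (or_else_tree t1 t2) = Some (or_else a b).
Proof.
  intros H1 H2. eapply run_bind; [exact H1|].
  destruct a; [destruct f2|]; simpl; auto.
Qed.

Definition query_tree (n f L i j : nat) (a : region) (dir : direction) : ptree :=
  Probe i (fun ri => Probe j (fun rj =>
    let '(lo, hi) := region_range n a ri rj in
    let search t x := descend f L (tree_addr n f L t) L 0 lo hi x in
    match dir with
    | Right => or_else_tree (search 0 i) (search 0 0)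
    | Left => bind (or_else_tree (search 1 (n + 1 - i)) (search 1 0))
                   (fun r => Leaf (option_map (fun k => n + 1 - k) r))
    end)).

Definition rank_table (n f L : nat) (Y : nat -> R) : list nat :=
  build_table n f L (rank n Y) (fun k => rank n Y (n + 1 - k)).

Lemma query_tree_correct n f L Y i j a dir : 1 <= f -> n <= f ^ L -> distinct_on n Y ->
  1 <= i <= n -> 1 <= j <= n ->
  run (2 + 2 * cost L) (rank_table n f L Y) (query_tree n f L i j a dir) =
  Some (answer n Y i j a dir).
Proof.
  intros Hf HN HY Hi Hj. set (rev_rank k := rank n Y (n + 1 - k)).
  set (T := rank_table n f L Y).
  assert (Hsearch : forall t rho, t < 2 -> rho = (if t =? 0 then rank n Y else rev_rank) ->
            forall lo hi x, x <= n ->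
            run (cost L) T (descend f L (tree_addr n f L t) L 0 lo hi x) =
            Some (range_succ n rho lo hi x)).
  { intros t rho Ht -> lo hi x Hx. apply descend_root; auto.
    - destruct (t =? 0); intros k Hk; [|unfold rev_rank]; apply rank_bound; lia.
    - destruct (t =? 0); [apply rank_inj; auto|].
      intros k l Hk Hl E. apply (rank_inj n Y HY) in E; lia.
    - apply build_table_cells_ok; auto. }
  assert (Hrank : forall x, x <= n -> nth x T 0 = rank n Y x).
  { intros x Hx. unfold T, rank_table.
    rewrite nth_build_table by (unfold table_size; lia). apply entry_rank; auto. }
  unfold query_tree. replace (2 + 2 * cost L) with (S (S (cost L + (cost L + 0)))) by lia.
  cbn [run]. rewrite !Hrank by lia.
  destruct dir.
  - pose proof (answer_right n Y i j a HY Hi Hj) as HA.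
    destruct (region_range n a (rank n Y i) (rank n Y j)) as [lo hi]. rewrite HA.
    rewrite Nat.add_0_r. apply run_or_else; apply Hsearch; auto; lia.
  - pose proof (answer_left n Y i j a HY Hi Hj) as HA.
    destruct (region_range n a (rank n Y i) (rank n Y j)) as [lo hi]. rewrite HA.
    rewrite Nat.add_assoc. eapply run_bind; [|reflexivity].
    apply run_or_else; apply Hsearch; auto; lia.
Qed.

Local Open Scope R_scope.

Lemma Rpower_ge1 (n : nat) (e : R) : (1 <= n)%nat -> 0 <= e -> 1 <= Rpower (INR n) e.
Proof.
  intros Hn He. rewrite <- (Rpower_O (INR n)) by (apply lt_0_INR; lia).
  apply Rle_Rpower; auto. apply (le_INR 1) in Hn. simpl in Hn. lra.
Qed.

(* The depth [L] of the tree: the table has about [n^(1 + 2/L)] cells. *)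
Lemma depth_for (eps : R) : 0 < eps -> exists L : nat, (1 <= L)%nat /\ 2 / INR L <= eps.
Proof.
  intros He. destruct (archimed_cor1 (eps / 2) ltac:(lra)) as [N [HN HN0]].
  exists N. split; [lia|]. unfold Rdiv. lra.
Qed.

Lemma branching_for (n L : nat) : (1 <= n)%nat -> (1 <= L)%nat ->
  exists f : nat, (1 <= f)%nat /\ (n <= f ^ L)%nat /\ INR f <= 2 * Rpower (INR n) (/ INR L).
Proof.
  intros Hn HL. set (x := Rpower (INR n) (/ INR L)).
  assert (HL' : 0 < INR L) by (apply lt_0_INR; lia).
  assert (Hx1 : 1 <= x) by (apply Rpower_ge1; auto; left; apply Rinv_0_lt_compat; auto).
  destruct (archimed x) as [Hu1 Hu2].
  assert (Hz : (0 <= up x)%Z) by (apply Z.lt_le_incl, lt_0_IZR; lra).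
  exists (Z.to_nat (up x)).
  assert (HF : INR (Z.to_nat (up x)) = IZR (up x)) by (rewrite INR_IZR_INZ, Znat.Z2Nat.id; auto).
  split; [|split].
  - destruct (Z.to_nat (up x)) eqn:E; [|lia]. simpl in HF. lra.
  - apply INR_le. rewrite pow_INR, HF.
    assert (Hxn : x ^ L = INR n).
    { unfold x. rewrite <- Rpower_pow by apply exp_pos.
      rewrite Rpower_mult, Rinv_l by lra. apply Rpower_1, lt_0_INR; lia. }
    rewrite <- Hxn. apply pow_incr. lra.
  - rewrite HF. lra.
Qed.

Lemma table_size_bound (n f L : nat) (eps : R) : (1 <= n)%nat -> (1 <= L)%nat ->
  2 / INR L <= eps -> 0 < eps -> INR f <= 2 * Rpower (INR n) (/ INR L) ->
  INR (table_size n f L) <= (2 + 108 * INR (S L) * 2 ^ L) * Rpower (INR n) (1 + eps).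
Proof.
  intros Hn HL HeL He HF.
  set (x := Rpower (INR n) (/ INR L)) in *.
  assert (HL' : 0 < INR L) by (apply lt_0_INR; lia).
  assert (Hn' : 0 < INR n) by (apply lt_0_INR; lia).
  assert (Hn1 : 1 <= INR n) by (apply (le_INR 1) in Hn; simpl in Hn; lra).
  assert (Hx1 : 1 <= x) by (apply Rpower_ge1; auto; left; apply Rinv_0_lt_compat; auto).
  assert (Hxn : x ^ L = INR n).
  { unfold x. rewrite <- Rpower_pow by apply exp_pos.
    rewrite Rpower_mult, Rinv_l by lra. apply Rpower_1; auto. }
  set (P := Rpower (INR n) eps).
  assert (HP : 1 <= P) by (apply Rpower_ge1; auto; lra).
  assert (Hx2 : x ^ 2 <= P).
  { unfold x. rewrite <- Rpower_pow by apply exp_pos. rewrite Rpower_mult.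
    apply Rle_Rpower; [lra|]. simpl. unfold Rdiv in HeL. lra. }
  assert (HPe : Rpower (INR n) (1 + eps) = INR n * P) by (rewrite Rpower_plus, Rpower_1; auto).
  rewrite HPe. set (F := INR f) in *. assert (HF0 : 0 <= F) by apply pos_INR.
  assert (Hleaves : F ^ L <= 2 ^ L * INR n).
  { rewrite <- Hxn, <- Rpow_mult_distr. apply pow_incr. lra. }
  assert (Hcoords : (F + 1) * (F + 1) <= 9 * P).
  { assert ((F + 1) * (F + 1) <= (3 * x) * (3 * x)) by (apply Rmult_le_compat; lra).
    simpl in Hx2. lra. }
  assert (Hprod : F ^ L * ((F + 1) * (F + 1)) <= (2 ^ L * INR n) * (9 * P)).
  { apply Rmult_le_compat; auto; [apply pow_le; auto | nra]. }
  assert (HS : INR (table_size n f L) =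
               INR n + 1 + 12 * (INR (S L) * (F ^ L * ((F + 1) * (F + 1))))).
  { unfold table_size, key_range, coord_range.
    rewrite plus_INR, !mult_INR, pow_INR, !plus_INR, !S_INR. fold F. simpl. ring. }
  rewrite HS. assert (HSL : 0 <= INR (S L)) by apply pos_INR.
  assert (INR (S L) * (F ^ L * ((F + 1) * (F + 1))) <= INR (S L) * ((2 ^ L * INR n) * (9 * P)))
    by (apply Rmult_le_compat_l; auto).
  assert (INR n <= INR n * P) by nra.
  replace ((2 + 108 * INR (S L) * 2 ^ L) * (INR n * P))
    with (2 * (INR n * P) + 12 * (INR (S L) * ((2 ^ L * INR n) * (9 * P)))) by ring.
  lra.
Qed.

Theorem mainTheorem8 :
  forall eps : R, 0 < eps ->
  exists (C : R) (K W : nat),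
    forall n : nat, (1 <= n)%nat ->
    exists Q : nat -> nat -> region -> direction -> ptree,
      forall Y : nat -> R, distinct_on n Y ->
      exists table : list nat,
        INR (length table) <= C * Rpower (INR n) (1 + eps) /\
        (forall x, In x table -> (x < (n + 1) ^ W)%nat) /\
        (forall (i j : nat) (a : region) (d : direction),
            (1 <= i <= n)%nat -> (1 <= j <= n)%nat ->
            run K table (Q i j a d) = Some (answer n Y i j a d)).
Proof.
  intros eps Heps.
  destruct (depth_for eps Heps) as [L [HL HeL]].
  exists (2 + 108 * INR (S L) * 2 ^ L), (2 + 2 * cost L)%nat, 1%nat.
  intros n Hn. destruct (branching_for n L Hn HL) as [f [Hf [HN HF]]].
  exists (query_tree n f L). intros Y HY. exists (rank_table n f L Y).
  split; [|split].
  - unfold rank_table. rewrite build_table_length. apply table_size_bound; auto.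
  - intros x Hx. rewrite Nat.pow_1_r. apply build_table_values in Hx; [lia | apply rank_le].
  - intros i j a d Hi Hj. apply query_tree_correct; auto.
Qed.
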